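(* For every integer $m\ge1$ and every $n\ge0$, $$v_{2n+1}(x,m,s,q)=\sum_{k=0}^{n}(-1)^k\begin{bmatrix}2n+1\\2k+1\end{bmatrix}\frac{[2m+2n]!\,[m+2n-2k-1]!}{[m+2n]!\,[2m+2n-2k-1]!}\,\frac{T_{2k+1}(q)\,x^{2k+1}}{(-q^{m+2n-2k};q)_{2k+1}}\,v_{2n-2k}(x,m,s,q).$$
   Context: $q$ is an indeterminate; $[n]=\frac{1-q^n}{1-q}$, $[n]!=[1]\cdots[n]$, $[0]!=1$, $\begin{bmatrix}n\\k\end{bmatrix}=\frac{[n]!}{[k]![n-k]!}$, $(a;q)_n=(1-a)(1-qa)\cdots(1-q^{n-1}a)$, $(a;q)_0=1$. For an integer $m\ge 0$ and indeterminates $x,s$, $$v_n(x,m,s,q)=\sum_{k=0}^{\lfloor n/2\rfloor}(-s)^kq^{k^2}\frac{[n]!}{[k]!\,[n-2k]!}\,\frac{[m+n-k-1]!}{[m+n-1]!}\,\frac{1}{(-q;q)_k\,(-q^{n+m-k};q)_k}\,x^{n-2k}\quad(n\ge1),\qquad v_0=1.$$ With $e_q(z)=\sum_{n\ge0}\frac{z^n}{[n]!}$, the $q$-tangent numbers $T_{2n+1}(q)$ are defined by $\frac{e_q(z)-e_q(-z)}{e_q(z)+e_q(-z)}=\sum_{n\ge0}(-1)^n\frac{T_{2n+1}(q)}{[2n+1]!}z^{2n+1}$ (so $T_1(q)=1$, $T_3(q)=q(1+q)$). *)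

From HB Require Import structures.
From mathcomp Require Import all_boot all_order all_algebra.
Set Implicit Arguments. Unset Strict Implicit. Unset Printing Implicit Defensive.
Import Order.TTheory GRing.Theory Num.Theory.
Local Open Scope ring_scope.

Section QDefs.
Variable F : fieldType.
Variable q : F.

Definition qint (n : nat) : F := \sum_(i < n) q ^+ i.
Definition qfact (n : nat) : F := \prod_(i < n) qint i.+1.
Definition qbinom (n k : nat) : F := qfact n / (qfact k * qfact (n - k)).
Definition qpoch (a : F) (n : nat) : F := \prod_(i < n) (1 - q ^+ i * a).

Definition qv (x s : F) (m n : nat) : F :=
  if n == 0%N then 1 else
  \sum_(k < n./2.+1)
     (- s) ^+ k * q ^+ (k * k)
     * (qfact n / (qfact k * qfact (n - 2 * k)))
     * (qfact (m + n - k - 1) / qfact (m + n - 1))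
     / (qpoch (- q) k * qpoch (- q ^+ (n + m - k)) k)
     * x ^+ (n - 2 * k).

(* Coefficients of e_q(z) + e_q(-z) and e_q(z) - e_q(-z), divided by 2:
   even part E(z) = sum_{j even} z^j/[j]!, odd part O(z) = sum_{j odd} z^j/[j]!. *)
Definition evcoef (j : nat) : F := if odd j then 0 else (qfact j)^-1.
Definition odcoef (j : nat) : F := if odd j then (qfact j)^-1 else 0.

(* Coefficients S_0..S_n of the power series S = O/E (note E_0 = 1), i.e. the
   unique series with E * S = O:  S_n = O_n - sum_{j<n} E_{n-j} S_j. *)
Fixpoint tanS_upto (n : nat) : seq F :=
  match n with
  | 0%N => [:: odcoef 0]
  | n'.+1 => let l := tanS_upto n' in
      rcons l (odcoef n - \sum_(j < n) evcoef (n - j) * nth 0 l j)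
  end.
Definition tanS (n : nat) : F := nth 0 (tanS_upto n) n.

(* q-tangent number T_{2n+1}(q): O/E = sum_n (-1)^n T_{2n+1}/[2n+1]! z^(2n+1). *)
Definition qtangent (n : nat) : F :=
  (-1) ^+ n * qfact (2 * n).+1 * tanS (2 * n).+1.

End QDefs.

From HB Require Import structures.
From mathcomp Require Import all_boot all_order all_algebra.
From mathcomp Require Import ring zify.
Import Order.TTheory GRing.Theory Num.Theory.
Local Open Scope ring_scope.
Set Implicit Arguments. Unset Strict Implicit. Unset Printing Implicit Defensive.

(* Normalise v_n(x, a+1, s) = [n]! [2a+n+1]! / ([a+n]! (-q;q)_(a+n)) * w_a(s; n).
   The w's satisfy the q-difference recurrence
     [M+2] w_a(s; M+2) - x q^(M+1) w_a(s; M+1) = (x^2 - s q) w_(a+1)(s q^2; M),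
     [1] w_a(s; 1) = x w_a(s; 0),
   which, by induction on the degree, makes e_q(-xz) * W(z) an even power series,
   where W(z) = sum_M w_a(s; M) z^M.  Splitting e_q(-xz) = E(xz) - O(xz) into even
   and odd parts, evenness says E W_odd = O W_even, i.e. W_odd = tan_q(xz) W_even
   with tan_q = O/E.  The coefficient of z^(2n+1) of this identity, renormalised,
   is the theorem. *)

Section QCalculus.
Variables (F : fieldType) (q : F).

Lemma qint0 : qint q 0 = 0.
Proof. by rewrite /qint big_ord0. Qed.

Lemma qint1 : qint q 1 = 1.
Proof. by rewrite /qint big_ord1 expr0. Qed.

Lemma qintS n : qint q n.+1 = qint q n + q ^+ n.
Proof. by rewrite /qint big_ord_recr. Qed.

Lemma qintD m n : qint q (m + n) = qint q m + q ^+ m * qint q n.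
Proof.
rewrite /qint big_split_ord /= mulr_sumr; congr (_ + _).
by apply: eq_bigr => i _; rewrite exprD.
Qed.

Lemma qfact0 : qfact q 0 = 1.
Proof. by rewrite /qfact big_ord0. Qed.

Lemma qfactS n : qfact q n.+1 = qfact q n * qint q n.+1.
Proof. by rewrite /qfact big_ord_recr. Qed.

Lemma qpochD a m n : qpoch q a (m + n) = qpoch q a m * qpoch q (q ^+ m * a) n.
Proof.
rewrite /qpoch big_split_ord /=; congr (_ * _).
by apply: eq_bigr => i _; rewrite exprD mulrA (mulrC (q ^+ i)).
Qed.

Definition qdfact (n : nat) : F := \prod_(i < n) qint q (2 * i).+2.

Lemma qdfact0 : qdfact 0 = 1.
Proof. by rewrite /qdfact big_ord0. Qed.

Lemma qdfactS n : qdfact n.+1 = qdfact n * qint q (2 * n).+2.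
Proof. by rewrite /qdfact big_ord_recr. Qed.

Lemma qfact_qpochE n : qfact q n * qpoch q (- q) n = qdfact n.
Proof.
elim: n => [|n IH]; first by rewrite qfact0 qdfact0 /qpoch big_ord0 mulr1.
rewrite qfactS /qpoch big_ord_recr /= -/(qpoch q (- q) n) qdfactS -IH.
have -> : (2 * n).+2 = (n.+1 + n.+1)%N by lia.
rewrite qintD mulrN -exprSr; ring.
Qed.

Hypothesis hq : forall j : nat, qint q j.+1 != 0.
Hypothesis hq' : forall j : nat, 1 + q ^+ j.+1 != 0.

Lemma qfact_neq0 n : qfact q n != 0.
Proof. by apply/prodf_neq0 => i _; apply: hq. Qed.

Lemma qdfact_neq0 n : qdfact n != 0.
Proof. by apply/prodf_neq0 => i _; apply: hq. Qed.

Lemma qpochNX_neq0 p n : qpoch q (- q ^+ p.+1) n != 0.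
Proof.
by apply/prodf_neq0 => i _; rewrite mulrN opprK -exprD addnS; apply: hq'.
Qed.

Lemma qpochN_neq0 n : qpoch q (- q) n != 0.
Proof. by have := qpochNX_neq0 0 n; rewrite expr1. Qed.

End QCalculus.

Lemma big_ord_pairs (V : nmodType) n (f : nat -> V) :
  \sum_(j < 2 * n.+1) f j = \sum_(k < n.+1) (f (2 * k)%N + f (2 * k).+1).
Proof.
elim: n => [|n IH]; first by rewrite big_ord1 muln1 2!big_ord_recr big_ord0 /= add0r.
have -> : (2 * n.+2 = (2 * n.+1).+2)%N by rewrite !mulnS.
by rewrite 2!big_ord_recr [RHS]big_ord_recr /= -IH addrA.
Qed.

Lemma coefM_eq_low (R : nzRingType) (p p' r : {poly R}) N :
  (forall i, (i <= N)%N -> p`_i = p'`_i) -> (p * r)`_N = (p' * r)`_N.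
Proof. by move=> h; rewrite !coefM; apply: eq_bigr => i _; rewrite h // -ltnS. Qed.

Lemma coefM_eq0_low (R : idomainType) (p r : {poly R}) K : p`_0 != 0 ->
  (forall N, (N < K)%N -> (p * r)`_N = 0) -> forall N, (N < K)%N -> r`_N = 0.
Proof.
move=> p0 hpr; elim/ltn_ind => N IH hN; apply/eqP.
rewrite -(mulrI_eq0 _ (lregP p0)); apply/eqP; rewrite -[RHS](hpr N hN) coefMr.
rewrite big_ord_recr /= subnn big1 ?add0r // => j _.
by rewrite IH ?mulr0 ?(ltn_trans _ hN).
Qed.

Section TangentSeries.
Variables (F : fieldType) (q : F).

Lemma size_tanS_upto n : size (tanS_upto q n) = n.+1.
Proof. by elim: n => [|n IH] //=; rewrite size_rcons IH. Qed.

Lemma nth_tanS_upto n j : (j <= n)%N -> nth 0 (tanS_upto q n) j = tanS q j.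
Proof.
elim: n => [|n IH]; first by rewrite leqn0 => /eqP ->.
rewrite leq_eqVlt => /orP [/eqP -> //|hj].
by rewrite /= nth_rcons size_tanS_upto hj IH.
Qed.

Lemma evcoef0 : evcoef q 0 = 1.
Proof. by rewrite /evcoef /= qfact0 invr1. Qed.

Lemma evcoef_tanS_conv l :
  \sum_(j < l.+1) evcoef q (l - j) * tanS q j = odcoef q l.
Proof.
case: l => [|l]; first by rewrite big_ord1 subnn evcoef0 mul1r /tanS.
rewrite big_ord_recr /= subnn evcoef0 mul1r.
have -> : tanS q l.+1 = odcoef q l.+1 - \sum_(j < l.+1) evcoef q (l.+1 - j) * tanS q j.
  rewrite /tanS /= nth_rcons size_tanS_upto ltnn eqxx; congr (_ - _).
  by apply: eq_bigr => j _; rewrite nth_tanS_upto // -ltnS.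
by rewrite addrC subrK.
Qed.

End TangentSeries.

Section QExpConvolution.
Variables (F : fieldType) (q x : F).
Hypothesis hq : forall j : nat, qint q j.+1 != 0.

(* The coefficients of e_q(-xz) * sum_i U_i z^i. *)
Definition econv (U : nat -> F) (N : nat) : F :=
  \sum_(i < N.+1) (-1) ^+ i / qfact q i * x ^+ i * U (N - i)%N.

Lemma econv_parity (U : nat -> F) N j : (j <= N)%N ->
  evcoef q j * x ^+ j * (if odd (N - j) then U (N - j)%N else 0)
  - odcoef q j * x ^+ j * (if odd (N - j) then 0 else U (N - j)%N) =
  if odd N then (-1) ^+ j / qfact q j * x ^+ j * U (N - j)%N else 0.
Proof.
move=> hj; rewrite /evcoef /odcoef oddB // -signr_odd.
by case: (odd N); case: (odd j); rewrite /= ?expr0 ?expr1; ring.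
Qed.

Lemma odd_coef_tan_conv (U : nat -> F) (hU : forall N, odd N -> econv U N = 0) N :
  odd N ->
  U N = \sum_(j < N.+1) tanS q j * x ^+ j * (if odd (N - j) then 0 else U (N - j)%N).
Proof.
move=> oddN; pose K := N.+1.
(* Truncations below degree K of E(xz), O(xz), (O/E)(xz) and of the even and
   odd parts of U(z); hU says E Uo = O Ue, and E Sp = O gives Uo = Sp Ue. *)
pose Ep := \poly_(i < K) (evcoef q i * x ^+ i).
pose Op := \poly_(i < K) (odcoef q i * x ^+ i).
pose Sp := \poly_(i < K) (tanS q i * x ^+ i).
pose Ue := \poly_(i < K) (if odd i then 0 else U i).
pose Uo := \poly_(i < K) (if odd i then U i else 0).
have EpSp l : (l < K)%N -> (Ep * Sp)`_l = Op`_l.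
  move=> hl; rewrite coefMr coef_poly hl -(@evcoef_tanS_conv _ q l) mulr_suml.
  apply: eq_bigr => j _; have hj : (j <= l)%N := ltnSE (ltn_ord j).
  rewrite !coef_poly (leq_ltn_trans hj hl) (leq_ltn_trans (leq_subr _ _) hl).
  have -> : x ^+ l = x ^+ (l - j) * x ^+ j by rewrite -exprD subnK.
  ring.
have EpUo M : (M < K)%N -> (Ep * Uo)`_M = (Op * Ue)`_M.
  move=> hM; apply/eqP; rewrite -subr_eq0 !coefM -sumrB; apply/eqP.
  transitivity (\sum_(j < M.+1)
      if odd M then (-1) ^+ j / qfact q j * x ^+ j * U (M - j)%N else 0); last first.
    by case hodd: (odd M); [exact: hU | rewrite big1].
  apply: eq_bigr => j _; have hj : (j <= M)%N := ltnSE (ltn_ord j).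
  rewrite !coef_poly (leq_ltn_trans hj hM) (leq_ltn_trans (leq_subr _ _) hM).
  exact: econv_parity.
have Ep0 : Ep`_0 != 0 by rewrite coef_poly /= expr0 mulr1 evcoef0 oner_neq0.
have : (Uo - Sp * Ue)`_N = 0.
  apply: (coefM_eq0_low Ep0 _ (ltnSn N)) => M hM.
  rewrite mulrBr coefB mulrA EpUo // [(Ep * Sp * Ue)`_M](@coefM_eq_low _ _ Op) ?subrr //.
  by move=> i hi; apply: EpSp; lia.
move/eqP; rewrite coefB subr_eq0 coef_poly ltnSn oddN coefM => /eqP ->.
apply: eq_bigr => j _; have hj : (j <= N)%N := ltnSE (ltn_ord j).
by rewrite !coef_poly (leq_ltn_trans hj (ltnSn N)) (leq_ltn_trans (leq_subr _ _) (ltnSn N)).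
Qed.

Lemma tan_expansion (U : nat -> F) (hU : forall N, odd N -> econv U N = 0) n :
  U (2 * n).+1 =
  \sum_(k < n.+1) tanS q (2 * k).+1 * x ^+ (2 * k).+1 * U (2 * n - 2 * k)%N.
Proof.
rewrite odd_coef_tan_conv ?oddS ?oddM //.
rewrite (_ : (2 * n).+2 = 2 * n.+1)%N; last by rewrite mulnS.
rewrite (big_ord_pairs n (fun j => tanS q j * x ^+ j *
  (if odd ((2 * n).+1 - j) then 0 else U ((2 * n).+1 - j)%N))).
apply: eq_bigr => k _; have hk : (k <= n)%N := ltnSE (ltn_ord k).
rewrite subSS subSn ?leq_mul2l // !oddS oddB ?leq_mul2l // !oddM /=.
by rewrite mulr0 add0r.
Qed.

Definition qdiff (U : nat -> F) (M : nat) : F :=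
  qint q M.+1 * U M.+1 - x * q ^+ M * U M.

Lemma econv_qdiff (U : nat -> F) N :
  qint q N.+1 * econv U N.+1 = econv (qdiff U) N.
Proof.
have qfact_qint i : (-1) ^+ i.+1 / qfact q i.+1 * qint q i.+1 = - ((-1) ^+ i / qfact q i).
  by rewrite qfactS exprS invfM; field; rewrite ?(qfact_neq0 hq) ?hq.
have split_qint (i : 'I_N.+2) :
    qint q N.+1 * ((-1) ^+ i / qfact q i * x ^+ i * U (N.+1 - i)%N) =
    (-1) ^+ i / qfact q i * x ^+ i * (qint q (N.+1 - i) * U (N.+1 - i)%N) +
    (-1) ^+ i / qfact q i * x ^+ i * (q ^+ (N.+1 - i) * qint q i * U (N.+1 - i)%N).
  by rewrite -{1}(subnK (ltnSE (ltn_ord i))) qintD; ring.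
rewrite /econv mulr_sumr (eq_bigr _ (fun i _ => split_qint i)) big_split /=.
rewrite big_ord_recr /= subnn qint0 mul0r mulr0 addr0.
rewrite (big_ord_recl N.+1) /= qint0 mulr0 mul0r mulr0 add0r.
rewrite /qdiff [RHS](eq_bigr _ (fun i _ => mulrBr _ _ _)) sumrB -sumrN.
congr (_ + _); apply: eq_bigr => i _; first by rewrite subSn // -ltnS.
rewrite /bump leq0n /= add1n subSS.
transitivity ((-1) ^+ i.+1 / qfact q i.+1 * qint q i.+1 * x ^+ i.+1 * (q ^+ (N - i) * U (N - i)%N)).
  by ring.
by rewrite qfact_qint exprSr; ring.
Qed.

Lemma econv_shift (W V : nat -> F) c N : W 0%N = 0 ->
  (forall k, W k.+1 = c * V k) -> econv W N.+1 = c * econv V N.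
Proof.
move=> W0 WS; rewrite /econv big_ord_recr /= subnn W0 mulr0 addr0 mulr_sumr.
by apply: eq_bigr => i _; rewrite subSn ?WS -1?ltnS //; ring.
Qed.

End QExpConvolution.

Section QW.
Variables (F : fieldType) (q x : F).
Hypothesis hq : forall j : nat, qint q j.+1 != 0.
Hypothesis hq' : forall j : nat, 1 + q ^+ j.+1 != 0.

Definition qw_term (a : nat) (s : F) (j M : nat) : F :=
  if (2 * j <= M)%N then
    (- s) ^+ j * q ^+ (j * j) * x ^+ (M - 2 * j) * qdfact q (a + M - j)
    / (qdfact q j * qfact q (M - 2 * j) * qfact q (2 * a + M + 1))
  else 0.

Definition qw (a : nat) (s : F) (M : nat) : F := \sum_(j < M./2.+1) qw_term a s j M.

(* The indices r, i1, i2 are parameters so that each use fixes the normal form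
   of the factorial arguments seen by [field]. *)
Lemma qw_termE r i1 i2 a s j M :
  (2 * j + r = M)%N -> (a + j + r = i1)%N -> (2 * a + 2 * j + r + 1 = i2)%N ->
  qw_term a s j M =
  (- s) ^+ j * q ^+ (j * j) * x ^+ r * qdfact q i1 / (qdfact q j * qfact q r * qfact q i2).
Proof.
move=> <- <- <-; rewrite /qw_term ifT ?leq_addr // addKn.
by congr (_ * qdfact q _ / (_ * qfact q _)); lia.
Qed.

Lemma qw_term_eq0 M a s j : (M < 2 * j)%N -> qw_term a s j M = 0.
Proof. by move=> hM; rewrite /qw_term ifF //; lia. Qed.

Lemma exprN_mul_sqr s n : (- (s * q ^+ 2)) ^+ n = (- s) ^+ n * q ^+ n * q ^+ n.
Proof. by rewrite -mulNr exprMn -exprM mul2n -addnn exprD mulrA. Qed.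

Lemma expr_sqrS n : q ^+ (n.+1 * n.+1) = q ^+ (n * n) * q ^+ n * q ^+ n * q.
Proof. rewrite -!exprD -exprSr; congr (_ ^+ _); lia. Qed.

Lemma qdiff_qw_term0 a s M :
  qdiff q x (qw_term a s 0) M.+1 = x ^+ 2 * qw_term a.+1 (s * q ^+ 2) 0 M.
Proof.
rewrite /qdiff.
rewrite [qw_term a _ _ M.+2](@qw_termE M.+2 (a + M).+2 (2 * a + M).+3); try lia.
rewrite [qw_term a _ _ M.+1](@qw_termE M.+1 (a + M).+1 (2 * a + M).+2); try lia.
rewrite [qw_term a.+1 _ _ M](@qw_termE M (a + M).+1 (2 * a + M).+3); try lia.
rewrite qdfactS (_ : qint q (2 * (a + M).+1).+2 =
                     qint q M.+1 + q ^+ M.+1 * qint q (2 * a + M).+3); last first.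
  by rewrite -qintD; congr qint; lia.
rewrite !qfactS !qdfact0 !expr0 !mul1r !exprS; field.
by rewrite ?hq ?(qfact_neq0 hq) ?(qdfact_neq0 hq).
Qed.

Lemma qdiff_qw_termS_even a s J :
  qdiff q x (qw_term a s J.+1) (2 * J).+1 =
  x ^+ 2 * qw_term a.+1 (s * q ^+ 2) J.+1 (2 * J) - s * q * qw_term a.+1 (s * q ^+ 2) J (2 * J).
Proof.
rewrite /qdiff.
rewrite [qw_term a _ _ (2 * J).+2](@qw_termE 0 (a + J).+1 (2 * a + 2 * J).+3); try lia.
rewrite [qw_term a _ _ (2 * J).+1]qw_term_eq0; try lia.
rewrite [qw_term _ _ J.+1 (2 * J)]qw_term_eq0; try lia.
rewrite [qw_term _ _ J (2 * J)](@qw_termE 0 (a + J).+1 (2 * a + 2 * J).+3); try lia.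
rewrite !exprN_mul_sqr !expr_sqrS !qdfactS !qfactS qfact0 !(exprS x) !(exprS (- s)) !(exprS q).
field.
by rewrite ?hq ?(qfact_neq0 hq) ?(qdfact_neq0 hq).
Qed.

Lemma qdiff_qw_termS_odd a s J :
  qdiff q x (qw_term a s J.+1) (2 * J).+2 =
  x ^+ 2 * qw_term a.+1 (s * q ^+ 2) J.+1 (2 * J).+1
  - s * q * qw_term a.+1 (s * q ^+ 2) J (2 * J).+1.
Proof.
rewrite /qdiff.
rewrite [qw_term a _ _ (2 * J).+3](@qw_termE 1 (a + J).+2 (2 * a + 2 * J).+4); try lia.
rewrite [qw_term a _ _ (2 * J).+2](@qw_termE 0 (a + J).+1 (2 * a + 2 * J).+3); try lia.
rewrite [qw_term _ _ J.+1 (2 * J).+1]qw_term_eq0; try lia.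
rewrite [qw_term _ _ J (2 * J).+1](@qw_termE 1 (a + J).+2 (2 * a + 2 * J).+4); try lia.
have -> : qint q (2 * J).+3 = qint q (2 * J).+2 + q ^+ J * q ^+ J * q ^+ 2.
  by rewrite qintS -!exprD; congr (_ + _ ^+ _); lia.
have -> : q ^+ (2 * J).+2 = q ^+ J * q ^+ J * q ^+ 2 by rewrite -!exprD; congr (_ ^+ _); lia.
rewrite !qdfactS (_ : qint q (2 * (a + J).+1).+2 = qint q (2 * a + 2 * J).+4); last first.
  by congr qint; lia.
rewrite !exprN_mul_sqr !expr_sqrS !qfactS qfact0 qint1.
rewrite !(exprS x) !(exprS (- s)) !(exprS q); field.
by rewrite ?hq ?(qfact_neq0 hq) ?(qdfact_neq0 hq).
Qed.

Lemma qdiff_qw_termS_interior a s J R :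
  qdiff q x (qw_term a s J.+1) (2 * J + R).+3 =
  x ^+ 2 * qw_term a.+1 (s * q ^+ 2) J.+1 (2 * J + R).+2
  - s * q * qw_term a.+1 (s * q ^+ 2) J (2 * J + R).+2.
Proof.
rewrite /qdiff.
rewrite [qw_term a _ _ (2 * J + R).+4]
  (@qw_termE R.+2 (a + J + R).+3 (2 * a + 2 * J + R).+4.+1); try lia.
rewrite [qw_term a _ _ (2 * J + R).+3]
  (@qw_termE R.+1 (a + J + R).+2 (2 * a + 2 * J + R).+4); try lia.
rewrite [qw_term _ _ J.+1 _](@qw_termE R (a + J + R).+2 (2 * a + 2 * J + R).+4.+1); try lia.
rewrite [qw_term _ _ J _](@qw_termE R.+2 (a + J + R).+3 (2 * a + 2 * J + R).+4.+1); try lia.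
have -> : qint q (2 * J + R).+4 = qint q (2 * J).+2 + q ^+ J * q ^+ J * q ^+ 2 * qint q R.+2.
  rewrite (_ : (2 * J + R).+4 = ((2 * J).+2 + R.+2)%N); last lia.
  rewrite qintD -!exprD; congr (_ + _ ^+ _ * _); lia.
have -> : q ^+ (2 * J + R).+3 = q ^+ J * q ^+ J * q ^+ R * q ^+ 3.
  by rewrite -!exprD; congr (_ ^+ _); lia.
rewrite !qdfactS (_ : qint q (2 * (a + J + R).+2).+2 =
          qint q R.+1 + q ^+ R * q * qint q (2 * a + 2 * J + R).+4.+1); last first.
  by rewrite -exprSr -qintD; congr qint; lia.
rewrite !exprN_mul_sqr !expr_sqrS !qfactS.
rewrite !(exprS x) !(exprS (- s)) !(exprS q); field.
by rewrite ?hq ?(qfact_neq0 hq) ?(qdfact_neq0 hq).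
Qed.

Lemma qdiff_qw_termS a s j M :
  qdiff q x (qw_term a s j.+1) M.+1 =
  x ^+ 2 * qw_term a.+1 (s * q ^+ 2) j.+1 M - s * q * qw_term a.+1 (s * q ^+ 2) j M.
Proof.
have [hM|] := ltnP M (2 * j).
  by rewrite /qdiff !qw_term_eq0 ?mulr0 ?subrr //; lia.
move/subnK; move: (M - 2 * j)%N => [|[|R]] <-.
- by rewrite add0n qdiff_qw_termS_even.
- by rewrite add1n qdiff_qw_termS_odd.
- by rewrite !addSn addnC qdiff_qw_termS_interior.
Qed.

Lemma qw_widen B a s M : (M./2 < B)%N -> \sum_(j < B) qw_term a s j M = qw a s M.
Proof.
move=> hB; rewrite /qw (big_ord_widen B (fun j => qw_term a s j M) hB) [RHS]big_mkcond.
by apply: eq_bigr => j _; case: ifP => // hj; rewrite qw_term_eq0 //; lia.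
Qed.

Lemma qdiff_qw0 a s : qdiff q x (qw a s) 0 = 0.
Proof.
rewrite /qdiff /qw !big_ord1 /= qint1 expr0 mulr1 mul1r.
rewrite [qw_term _ _ _ 1](@qw_termE 1 a.+1 (2 * a).+2); try lia.
rewrite [qw_term _ _ _ 0](@qw_termE 0 a (2 * a).+1); try lia.
rewrite qdfactS !qfactS qfact0 qint1 !expr0 !expr1; field.
by rewrite ?hq ?(qfact_neq0 hq) ?(qdfact_neq0 hq).
Qed.

Lemma qdiff_qwS a s M :
  qdiff q x (qw a s) M.+1 = (x ^+ 2 - s * q) * qw a.+1 (s * q ^+ 2) M.
Proof.
set w' := qw_term a.+1 (s * q ^+ 2).
rewrite /qdiff -(@qw_widen M.+3 _ _ M.+2) -?(@qw_widen M.+3 _ _ M.+1); try lia.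
rewrite !mulr_sumr -sumrB big_ord_recl -/(qdiff q x (qw_term a s 0) M.+1).
rewrite qdiff_qw_term0 (eq_bigr (fun j : 'I_M.+2 => x ^+ 2 * w' j.+1 M - s * q * w' j M));
  last by move=> j _; rewrite -qdiff_qw_termS.
rewrite sumrB -!mulr_sumr addrA -mulrDr.
rewrite -[w' 0%N M + _](big_ord_recl M.+2 (fun j => w' j M)).
by rewrite !qw_widen ?mulrBl //; lia.
Qed.

Lemma econv_qw_odd n a s : econv q x (qw a s) (2 * n).+1 = 0.
Proof.
elim: n a s => [|n IH] a s.
  by apply: (mulfI (hq 0)); rewrite (econv_qdiff x hq) /econv big_ord1 qdiff_qw0 !mulr0.
apply: (mulfI (hq (2 * n).+2)); rewrite mulr0 mulnS (econv_qdiff x hq).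
by rewrite (econv_shift _ _ _ (qdiff_qw0 a s) (qdiff_qwS a s)) IH mulr0.
Qed.

Lemma qw_odd_expansion a s n :
  qw a s (2 * n).+1 =
  \sum_(k < n.+1) tanS q (2 * k).+1 * x ^+ (2 * k).+1 * qw a s (2 * n - 2 * k).
Proof.
apply: tan_expansion => N hN.
by rewrite -(odd_double_half N) hN add1n -mul2n econv_qw_odd.
Qed.

Lemma qv_qw s a N :
  qv q x s a.+1 N = qfact q N * qfact q (2 * a + N + 1) / qdfact q (a + N) * qw a s N.
Proof.
case: N => [|N].
  rewrite /qv /qw /= big_ord1 /= (@qw_termE 0 a (2 * a).+1); try lia.
  rewrite !addn0 addn1 qfact0 qdfact0 !expr0; field.
  by rewrite ?(qfact_neq0 hq) ?(qdfact_neq0 hq).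
rewrite /qv /qw /= mulr_sumr; apply: eq_bigr => k _.
have [r hr] : exists r, N.+1 = (2 * k + r)%N by exists (N.+1 - 2 * k)%N; have := ltn_ord k; lia.
rewrite hr (@qw_termE r (a + k + r) (2 * a + 2 * k + r + 1)); try lia.
rewrite (_ : 2 * k + r - 2 * k = r)%N; last lia.
rewrite (_ : a.+1 + (2 * k + r) - k - 1 = a + k + r)%N; last lia.
rewrite (_ : a.+1 + (2 * k + r) - 1 = (a + k + r) + k)%N; last lia.
rewrite (_ : 2 * k + r + a.+1 - k = (a + k + r).+1)%N; last lia.
rewrite (_ : 2 * a + (2 * k + r) + 1 = 2 * a + 2 * k + r + 1)%N; last lia.
rewrite (_ : a + (2 * k + r) = (a + k + r) + k)%N; last lia.
rewrite -!qfact_qpochE qpochD mulrN -exprSr; field.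
by rewrite ?(qfact_neq0 hq) ?(qpochN_neq0 hq') ?(qpochNX_neq0 hq').
Qed.

End QW.

Unset Implicit Arguments. Set Strict Implicit.

Theorem mainTheorem19 (F : fieldType) (q x s : F) (m n : nat)
  (hq : forall j : nat, qint q j.+1 != 0)
  (hq' : forall j : nat, 1 + q ^+ j.+1 != 0)
  (hm : (1 <= m)%N) :
  qv q x s m (2 * n).+1 =
  \sum_(k < n.+1)
     (-1) ^+ k * qbinom q (2 * n).+1 (2 * k).+1
     * ((qfact q (2 * m + 2 * n) * qfact q (m + 2 * n - 2 * k - 1))
        / (qfact q (m + 2 * n) * qfact q (2 * m + 2 * n - 2 * k - 1)))
     * (qtangent q k * x ^+ (2 * k).+1 / qpoch q (- q ^+ (m + 2 * n - 2 * k)) (2 * k).+1)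
     * qv q x s m (2 * n - 2 * k).
Proof.
case: m hm => [//|a] _.
rewrite (qv_qw _ hq hq') (qw_odd_expansion _ hq) mulr_sumr; apply: eq_bigr => [[k hk]] _ /=.
have [d ->] : exists d, n = (k + d)%N by exists (n - k)%N; lia.
rewrite (qv_qw _ hq hq') /qtangent /qbinom.
rewrite (_ : 2 * (k + d) - 2 * k = 2 * d)%N; last lia.
rewrite (_ : (2 * (k + d)).+1 - (2 * k).+1 = 2 * d)%N; last lia.
rewrite (_ : 2 * a + (2 * (k + d)).+1 + 1 = 2 * a.+1 + 2 * (k + d))%N; last lia.
rewrite (_ : a.+1 + 2 * (k + d) - 2 * k - 1 = a + 2 * d)%N; last lia.
rewrite (_ : a + (2 * (k + d)).+1 = (a + 2 * d) + (2 * k).+1)%N; last lia.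
rewrite (_ : 2 * a.+1 + 2 * (k + d) - 2 * k - 1 = 2 * a + 2 * d + 1)%N; last lia.
rewrite (_ : a.+1 + 2 * (k + d) - 2 * k = (a + 2 * d).+1)%N; last lia.
rewrite (_ : a.+1 + 2 * (k + d) = (a + 2 * d) + (2 * k).+1)%N; last lia.
rewrite -!qfact_qpochE qpochD mulrN -exprSr -signr_odd.
by case: (odd k); rewrite ?expr0 ?expr1; field;
  rewrite ?(qfact_neq0 hq) ?(qpochN_neq0 hq') ?(qpochNX_neq0 hq').
Qed.
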